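(* Let $A$ be a random variable with values in $\{u,v\}$, $\mathbb{P}(A=u)=p_u$, $\mathbb{P}(A=v)=p_v$, $p_u+p_v=1$, and let $(U,V)$ be a random vector independent of $A$ that is bivariate normal with means $\mu_u<0$, $\mu_v<0$, standard deviations $\sigma_u,\sigma_v>0$, and correlation $\rho$. For $z_u,z_v\in\mathbb{R}$ let \[g(z_u,z_v)=p_u\,\mathbb{P}(U>z_u)\,\mathbb{E}[U+V\mid U>z_u]+p_v\,\mathbb{P}(V>z_v)\,\mathbb{E}[U+V\mid V>z_v].\] Define \[\rho_1=\left[\left(\frac{-\mu_u}{\sigma_u}\right)M\left(\frac{-\mu_u}{\sigma_u}\right)\left(1+\frac{\mu_v}{\mu_u}\right)-1\right]\frac{\sigma_u}{\sigma_v},\qquad \rho_2=\left[\left(\frac{-\mu_v}{\sigma_v}\right)M\left(\frac{-\mu_v}{\sigma_v}\right)\left(1+\frac{\mu_u}{\mu_v}\right)-1\right]\frac{\sigma_v}{\sigma_u}.\] If $-1\le\rho<\min(\rho_1,\rho_2)$, then $g(0,0)<0$.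
   Context: $\phi,\Phi$ are the standard normal density and CDF and $M(\alpha)=(1-\Phi(\alpha))/\phi(\alpha)$ is the Mills ratio. $g(z_u,z_v)=\mathbb{E}[D(U+V)]$ with $D=\mathbb{I}(A=u,U>z_u)+\mathbb{I}(A=v,V>z_v)$ is the long-run average overall performance when innovations with primary dimension $u$ (resp. $v$) are adopted iff their effect exceeds the hurdle $z_u$ (resp. $z_v$). *)

From HB Require Import structures.
From mathcomp Require Import all_boot all_order all_algebra.
From mathcomp Require Import all_classical all_reals all_analysis.
Set Implicit Arguments. Unset Strict Implicit. Unset Printing Implicit Defensive.
Import Order.TTheory GRing.Theory Num.Theory.
Import numFieldNormedType.Exports.
Local Open Scope classical_set_scope.
Local Open Scope ring_scope.

Section defs.
Context {R : realType}.

Definition phi (x : R) : R := normal_pdf 0 1 x.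
Definition Phi (a : R) : R := fine (normal_prob 0 1 `]-oo, a]).
Definition Mills (a : R) : R := (1 - Phi a) / phi a.

Definition std_normal2 := (@normal_prob R 0 1 \x @normal_prob R 0 1)%E.

(* canonical model of a bivariate normal (U,V) with means mu_u, mu_v,
   standard deviations s_u, s_v and correlation rho (|rho| <= 1):
   U = mu_u + s_u Z1,  V = mu_v + s_v (rho Z1 + sqrt(1 - rho^2) Z2). *)
Definition bnU (mu_u s_u : R) (z : R * R) : R := mu_u + s_u * z.1.
Definition bnV (mu_v s_v rho : R) (z : R * R) : R :=
  mu_v + s_v * (rho * z.1 + Num.sqrt (1 - rho ^+ 2) * z.2).

(* g(z_u,z_v) = p_u E[(U+V) 1{U > z_u}] + p_v E[(U+V) 1{V > z_v}]
   (= p_u P(U>z_u) E[U+V | U>z_u] + p_v P(V>z_v) E[U+V | V>z_v]) *)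
Definition perf_g (p_u p_v mu_u mu_v s_u s_v rho z_u z_v : R) : \bar R :=
  ((p_u%:E * \int[std_normal2]_(z in [set z | (z_u < bnU mu_u s_u z)%R])
       (bnU mu_u s_u z + bnV mu_v s_v rho z)%:E)
 + (p_v%:E * \int[std_normal2]_(z in [set z | (z_v < bnV mu_v s_v rho z)%R])
       (bnU mu_u s_u z + bnV mu_v s_v rho z)%:E))%E.

Definition rho1 (mu_u mu_v s_u s_v : R) : R :=
  ((- mu_u / s_u) * Mills (- mu_u / s_u) * (1 + mu_v / mu_u) - 1) * (s_u / s_v).
Definition rho2 (mu_u mu_v s_u s_v : R) : R :=
  ((- mu_v / s_v) * Mills (- mu_v / s_v) * (1 + mu_u / mu_v) - 1) * (s_v / s_u).

End defs.

From HB Require Import structures.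
From mathcomp Require Import all_boot all_order all_algebra.
From mathcomp Require Import all_classical all_reals all_analysis.
From mathcomp Require Import measurable_realfun.
From mathcomp Require Import ring lra.
Import Order.TTheory GRing.Theory Num.Theory.
Import numFieldNormedType.Exports.
Local Open Scope classical_set_scope.
Local Open Scope ring_scope.
Set Implicit Arguments. Unset Strict Implicit. Unset Printing Implicit Defensive.

(* Write U = mu_u + s_u Z1 and V = mu_v + s_v W with W = rho Z1 + sqrt(1 - rho^2) Z2 for a
   standard Gaussian vector (Z1, Z2).  Each summand of g(z_u, z_v) is then the integral of an
   affine function of (Z1, Z2) over a half-plane.  The standard Gaussian law of the plane is
   rotation invariant (a rotation is a product of three shears, and shears preserve Lebesgue
   measure by Fubini), so after rotating W onto the first axis both summands reduce to
     E[(c0 + c1 Z1 + c2 Z2) 1{Z1 > a}] = c0 (1 - Phi a) + c1 phi a   (a >= 0),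
   which follows from E Z2 = 0 and phi' = - x phi.  Hence g(0,0) = p_u X + p_v Y with
     X = (mu_u + mu_v) (1 - Phi a) + (s_u + rho s_v) phi a,   a = - mu_u / s_u,
   and Y symmetric; dividing by phi a > 0, X < 0 is exactly rho < rho1 and Y < 0 is exactly
   rho < rho2. *)

Section plane_maps.
Variable R : realType.
Local Notation RR := (measurableTypeR R * measurableTypeR R)%type.

Definition shear_l (k : R) (z : RR) : RR := ((z.1 + k * z.2)%R : measurableTypeR R, z.2).
Definition shear_r (k : R) (z : RR) : RR := (z.1, (z.2 + k * z.1)%R : measurableTypeR R).

Lemma measurable_shear_l k : measurable_fun [set: RR] (shear_l k).
Proof.
apply/measurable_fun_pairP; split => /=; last exact: measurable_snd.
by apply: measurable_funD;
  [exact: measurable_fst | apply: measurable_funM => //; exact: measurable_snd].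
Qed.

Lemma measurable_shear_r k : measurable_fun [set: RR] (shear_r k).
Proof.
apply/measurable_fun_pairP; split => /=; first exact: measurable_fst.
by apply: measurable_funD;
  [exact: measurable_snd | apply: measurable_funM => //; exact: measurable_fst].
Qed.

Definition rotation (r c : R) (z : RR) : RR :=
  ((r * z.1 + c * z.2)%R : measurableTypeR R, (- c * z.1 + r * z.2)%R : measurableTypeR R).

Lemma measurable_rotation r c : measurable_fun [set: RR] (rotation r c).
Proof.
by apply/measurable_fun_pairP; split => /=; apply: measurable_funD;
  apply: measurable_funM => //; solve [exact: measurable_fst | exact: measurable_snd].
Qed.

(* Paeth's three-shear decomposition of a rotation. *)
Lemma rotation_shears r c : r ^+ 2 + c ^+ 2 = 1 -> c != 0 ->
  rotation r c =1 shear_l ((1 - r) / c) \o shear_r (- c) \o shear_l ((1 - r) / c).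
Proof.
move=> rc c0 [z1 z2]; set k := (1 - r) / c.
have kc : k * c = 1 - r by rewrite divfK.
have kr : k * (1 + r) = c.
  by apply: (mulIf c0); rewrite mulrAC kc; nra.
clearbody k; have rE : r = 1 - k * c by rewrite kc; ring.
rewrite /rotation /shear_l /shear_r /=; congr pair; first rewrite -[in LHS]kr.
all: by rewrite rE; ring.
Qed.

End plane_maps.

Section lebesgue_invariance.
Variable R : realType.
Local Notation mu := (@lebesgue_measure R).
Local Notation RR := (measurableTypeR R * measurableTypeR R)%type.
Local Open Scope ereal_scope.

Lemma ge0_integral_lebesgue_comp (h : R -> R) (f : R -> \bar R) :
  measurable_fun [set: R] h ->
  (forall a b : R, mu (h @^-1` `]a, b]) = mu `]a, b]) ->
  measurable_fun [set: R] f -> (forall x, 0 <= f x) ->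
  \int[mu]_x f (h x) = \int[mu]_x f x.
Proof.
move=> mh hitv mf f0.
(* The measure instance of [pushforward] is parameterized by the measurability of [h]. *)
pose nu : {measure set (measurableTypeR R) -> \bar R} :=
  ltac:(by refine (pushforward mu (h : measurableTypeR R -> measurableTypeR R)
    : {measure set (measurableTypeR R) -> \bar R})).
transitivity (\int[nu]_x f x); first by rewrite ge0_integral_pushforward.
apply: (@eq_measure_integral _ _ _ setT mu nu) => A mA _.
symmetry; apply: lebesgue_measure_unique => // _ [[a b] _ <-].
exact: (esym (hitv a b)).
Qed.

Lemma ge0_integral_lebesgue_shift (t : R) (f : R -> \bar R) :
  measurable_fun [set: R] f -> (forall x, 0 <= f x) ->
  \int[mu]_x f (x + t)%R = \int[mu]_x f x.
Proof.
apply: ge0_integral_lebesgue_comp; first exact: measurable_funD.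
move=> a b; have -> : (+%R^~ t) @^-1` `]a, b] = `](a - t)%R, (b - t)%R]%classic.
  by apply/seteqP; split => x /=; rewrite !in_itv /= => /andP[? ?]; apply/andP; split; lra.
rewrite !lebesgue_measure_itv /= !lte_fin ltrD2r.
by case: ifP => // _; congr (_%:E); ring.
Qed.

Lemma ge0_integral_lebesgue_opp (f : R -> \bar R) :
  measurable_fun [set: R] f -> (forall x, 0 <= f x) ->
  \int[mu]_x f (- x)%R = \int[mu]_x f x.
Proof.
apply: ge0_integral_lebesgue_comp; first exact: oppr_measurable.
move=> a b; have -> : -%R @^-1` `]a, b] = `[(- b)%R, (- a)%R[%classic.
  by apply/seteqP; split => x /=; rewrite !in_itv /= => /andP[? ?]; apply/andP; split; lra.
rewrite !lebesgue_measure_itv /= !lte_fin ltrN2.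
by case: ifP => // _; congr (_%:E); ring.
Qed.

Lemma ge0_integral_lebesgue2_shear_l k (f : RR -> \bar R) :
  measurable_fun [set: RR] f -> (forall z, 0 <= f z) ->
  \int[mu \x mu]_z f (shear_l k z) = \int[mu \x mu]_z f z.
Proof.
move=> mf f0.
rewrite fubini_tonelli2 //; last exact: measurableT_comp (measurable_shear_l k).
rewrite [RHS]fubini_tonelli2 //; apply: eq_integral => y _.
apply: (ge0_integral_lebesgue_shift (k * y) (f := fun x => f (x, y))) => //.
exact: measurable_fun_pair1.
Qed.

Lemma ge0_integral_lebesgue2_shear_r k (f : RR -> \bar R) :
  measurable_fun [set: RR] f -> (forall z, 0 <= f z) ->
  \int[mu \x mu]_z f (shear_r k z) = \int[mu \x mu]_z f z.
Proof.
move=> mf f0.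
rewrite fubini_tonelli1 //; last exact: measurableT_comp (measurable_shear_r k).
rewrite [RHS]fubini_tonelli1 //; apply: eq_integral => x _.
apply: (ge0_integral_lebesgue_shift (k * x) (f := fun y => f (x, y))) => //.
exact: measurable_fun_pair2.
Qed.

Lemma ge0_integral_lebesgue2_rotation r c (f : RR -> \bar R) :
  (r ^+ 2 + c ^+ 2 = 1)%R -> (c != 0)%R ->
  measurable_fun [set: RR] f -> (forall z, 0 <= f z) ->
  \int[mu \x mu]_z f (rotation r c z) = \int[mu \x mu]_z f z.
Proof.
move=> rc c0 mf f0; under eq_integral do rewrite (rotation_shears rc c0).
set k := ((1 - r) / c)%R.
have mfk : measurable_fun [set: RR] (f \o shear_l k).
  exact: measurableT_comp (measurable_shear_l k).
have mfkc : measurable_fun [set: RR] (f \o shear_l k \o shear_r (- c)%R).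
  exact: measurableT_comp (measurable_shear_r _).
transitivity (\int[mu \x mu]_z (f \o shear_l k) z); last exact: ge0_integral_lebesgue2_shear_l.
transitivity (\int[mu \x mu]_z (f \o shear_l k \o shear_r (- c)%R) z).
  exact: (ge0_integral_lebesgue2_shear_l k mfkc (fun z => f0 _)).
exact: (ge0_integral_lebesgue2_shear_r _ mfk (fun z => f0 _)).
Qed.

End lebesgue_invariance.

Section std_normal.
Variable R : realType.
Local Notation mu := (@lebesgue_measure R).
Local Notation N := (@normal_prob R 0 1).

Lemma phiE (x : R) : phi x = normal_peak 1 * expR (- (x ^+ 2 / 2)).
Proof. by rewrite /phi /normal_pdf oner_eq0 /normal_fun subr0 expr1n mulNr. Qed.

Lemma phi_gt0 (x : R) : 0 < phi x.
Proof. by rewrite phiE mulr_gt0 ?expR_gt0 // normal_peak_gt0 // oner_neq0. Qed.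

Lemma phi_ge0 (x : R) : 0 <= phi x.
Proof. exact: normal_pdf_ge0. Qed.

Lemma phiN (x : R) : phi (- x) = phi x.
Proof. by rewrite !phiE sqrrN. Qed.

Lemma measurable_phi : measurable_fun [set: R] phi.
Proof. exact: measurable_normal_pdf. Qed.

Lemma is_derive_expR_comp (g : R -> R) (x dg : R) : is_derive x 1 g dg ->
  is_derive x 1 (expR \o g) (expR (g x) * dg).
Proof.
move=> dg_x; have dgx : derivable g x 1 by exact: ex_derive.
apply: DeriveDef.
  by apply/derivable1_diffP/differentiable_comp;
    apply/derivable1_diffP => //; exact: derivable_expR.
by rewrite -derive1E derive1_comp ?derive1E ?derive_val //; exact: derivable_expR.
Qed.

Lemma is_derive_phi (x : R) : is_derive x 1 phi (- x * phi x).
Proof.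
have -> : phi = normal_peak 1 \*: (expR \o (fun y : R => - (y ^+ 2 / 2))).
  by apply/funext => y; exact: phiE.
have dg : is_derive x 1 (fun y : R => - (y ^+ 2 / 2)) (- x).
  have -> : (fun y : R => - (y ^+ 2 / 2)) = (- 2^-1) \*: (@id R ^+ 2).
    by apply/funext => y; change (- (y ^+ 2 / 2) = - 2^-1 * y ^+ 2); rewrite mulrC mulNr.
  apply: is_derive_eq; change (- 2^-1 * ((2 * x ^+ 1) * 1) = - x).
  by rewrite mulr1 expr1 mulrA mulNr mulVf ?pnatr_eq0 // mulN1r.
apply: is_derive_eq (is_deriveZ (normal_peak 1) (is_derive_expR_comp dg)) _.
by rewrite /= scalerAl mulrC.
Qed.

Lemma continuous_phi : continuous (@phi R).
Proof. exact/continuous_normal_pdf/oner_neq0. Qed.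

Lemma cvgy_phi : phi x @[x --> +oo] --> (0 : R).
Proof.
under eq_fun do rewrite phiE; rewrite -(mulr0 (normal_peak 1)); apply: cvgMr.
apply: (cvg_comp (fun x => x ^+ 2 / 2) (fun x => expR (- x))); last exact: cvgr_expR.
by apply: gt0_cvgMly; [rewrite invr_gt0 | exact: cvgr_expr2].
Qed.

Lemma integral_itvcy_mul_phi (a : R) : 0 <= a ->
  (\int[mu]_(x in `[a, +oo[) ((x * phi x)%:E) = (phi a)%:E)%E.
Proof.
move=> a0.
have dNphi (x : R) : is_derive x 1 (fun y => - phi y) (x * phi x).
  by apply: is_derive_eq (is_deriveN (is_derive_phi x)) _; rewrite mulNr opprK.
rewrite (@ge0_continuous_FTC2y R _ (fun x => - phi x) a 0).
- by rewrite sub0e -EFinN opprK.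
- by move=> x ax; rewrite mulr_ge0 ?phi_ge0 // (le_trans a0 ax).
- by apply: continuous_subspaceT => x; apply: cvgM; [exact: cvg_id | exact: continuous_phi].
- by rewrite -oppr0; apply: cvgN; exact: cvgy_phi.
- by move=> x _; have dx := dNphi x; exact: ex_derive.
- by apply: cvg_at_right_filter; apply: cvgN; exact: continuous_phi.
- by move=> x _; have dx := dNphi x; rewrite derive1E derive_val.
Qed.

Local Open Scope ereal_scope.

(* [normal_prob m s] is defined through its density, so its Radon-Nikodym derivative
   agrees almost everywhere with [normal_pdf m s]. *)
Lemma ge0_integral_normal_prob (m s : R) (f : R -> \bar R) :
  measurable_fun [set: R] f -> (forall x, 0 <= f x) ->
  \int[normal_prob m s]_x f x = \int[mu]_x (f x * (normal_pdf m s x)%:E).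
Proof.
move=> mf f0; have Nmu := normal_prob_dominates m s.
rewrite -(Radon_Nikodym_SigmaFinite.change_of_variables Nmu f0) //.
have mpdf : measurable_fun [set: R] (EFin \o normal_pdf m s).
  by apply/measurable_EFinP; exact: measurable_normal_pdf.
apply: ae_eq_integral => //.
- apply: emeasurable_funM => //.
  exact: measurable_int (Radon_Nikodym_SigmaFinite.f_integrable Nmu).
- exact: emeasurable_funM.
- apply: ae_eqe_mul2l; apply: integral_ae_eq => //.
  + exact: Radon_Nikodym_SigmaFinite.f_integrable.
  + by move=> E _ mE; rewrite -Radon_Nikodym_SigmaFinite.f_integral.
Qed.

Lemma integral_std_normal_cst (c : \bar R) : \int[N]_x c = c.
Proof. by rewrite integral_cst //; change (c * N setT = c); rewrite probability_setT mule1. Qed.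

Let measurable_EFin : measurable_fun [set: R] (@EFin R).
Proof. by apply/measurable_EFinP. Qed.

Lemma integral_std_normal_funepos_id : \int[N]_x ((@EFin R)^\+ x) = (phi 0)%:E.
Proof.
rewrite ge0_integral_normal_prob //; last exact: measurable_funepos.
rewrite -(integral_itvcy_mul_phi (lexx 0)) [RHS]integral_mkcond.
apply: eq_integral => x _; rewrite patchE funeposE mem_setE /= in_itv /= andbT.
have [x0|x0] := leP 0%R x; first by rewrite max_l ?lee_fin // EFinM.
by rewrite max_r ?lee_fin ?ltW // mul0e.
Qed.

Lemma integral_std_normal_funeneg_id : \int[N]_x ((@EFin R)^\- x) = (phi 0)%:E.
Proof.
rewrite ge0_integral_normal_prob //; last exact: measurable_funeneg.
rewrite -integral_std_normal_funepos_id ge0_integral_normal_prob //; last first.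
  exact: measurable_funepos.
rewrite -[RHS]ge0_integral_lebesgue_opp; last 2 first.
- apply: emeasurable_funM; first exact: measurable_funepos.
  by apply/measurable_EFinP; exact: measurable_phi.
- by move=> x; rewrite mule_ge0 // lee_fin phi_ge0.
by apply: eq_integral => x _; rewrite funenegE funeposE -/(phi (- x)) phiN EFinN.
Qed.

Lemma integrable_std_normal_id : N.-integrable [set: R] EFin.
Proof.
apply/integrableP; split; first exact: measurable_EFin.
have -> : (fun x : R => `|x%:E|) = EFin^\+ \+ EFin^\- by exact: fune_abse.
rewrite ge0_integralD //.
- by rewrite integral_std_normal_funepos_id integral_std_normal_funeneg_id -EFinD ltry.
- exact: measurable_funepos.
- exact: measurable_funeneg.
Qed.

Lemma integral_std_normal_id : \int[N]_x x%:E = 0.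
Proof.
by rewrite integralE integral_std_normal_funepos_id integral_std_normal_funeneg_id subee.
Qed.

Lemma integral_std_normal_itvoy_id (a : R) : (0 <= a)%R ->
  \int[N]_(x in `]a, +oo[) x%:E = (phi a)%:E.
Proof.
move=> a0; have mA : measurable `]a, +oo[%classic by [].
rewrite integral_mkcond ge0_integral_normal_prob; first last.
- move=> x; rewrite patchE; case: ifPn => // /set_mem /=.
  by rewrite in_itv andbT lee_fin => /ltW/(le_trans a0).
- by apply/(measurable_restrictT _ mA); exact: measurable_funTS.
rewrite -(integral_itvcy_mul_phi a0) -integral_itv_obnd_cbnd; last first.
  apply/measurable_EFinP; apply: measurable_funM => //.
  by apply: measurable_funTS; exact: measurable_normal_pdf.
rewrite [RHS]integral_mkcond; apply: eq_integral => x _; rewrite !patchE.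
by case: ifPn => _; rewrite ?mul0e // EFinM.
Qed.

Lemma std_normal_itvoy (a : R) : N `]a, +oo[ = (1 - Phi a)%:E.
Proof.
rewrite -setCitvl probability_setC // EFinB fineK //.
exact: fin_num_measure.
Qed.

End std_normal.

Section std_normal2.
Variable R : realType.
Local Notation mu := (@lebesgue_measure R).
Local Notation RR := (measurableTypeR R * measurableTypeR R)%type.
Local Notation N := (@normal_prob R 0 1).
Local Open Scope ereal_scope.

Definition phi2 (z : RR) : R := (phi z.1 * phi z.2)%R.

Lemma measurable_phi2 : measurable_fun [set: RR] phi2.
Proof.
by apply: measurable_funM; apply: measurableT_comp (@measurable_phi R) _;
  [exact: measurable_fst | exact: measurable_snd].
Qed.

Lemma phi2_rotation r c z : (r ^+ 2 + c ^+ 2 = 1)%R -> phi2 (rotation r c z) = phi2 z.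
Proof.
move=> rc; rewrite /phi2 !phiE mulrACA [RHS]mulrACA -!expRD; congr (_ * expR _)%R.
transitivity (- ((r ^+ 2 + c ^+ 2) * (z.1 ^+ 2 + z.2 ^+ 2)) / 2)%R; first by rewrite /=; ring.
by rewrite rc; ring.
Qed.

Lemma ge0_integral_std_normal2 (f : RR -> \bar R) :
  measurable_fun [set: RR] f -> (forall z, 0 <= f z) ->
  \int[std_normal2]_z f z = \int[mu \x mu]_z (f z * (phi2 z)%:E).
Proof.
move=> mf f0.
have phiE_ge0 (x : R) : 0 <= (phi x)%:E by rewrite lee_fin phi_ge0.
have mfphi : measurable_fun [set: RR] (fun z => f z * (phi z.2)%:E).
  apply: emeasurable_funM => //; apply/measurable_EFinP.
  exact: measurableT_comp (@measurable_phi R) measurable_snd.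
rewrite fubini_tonelli1 // [RHS]fubini_tonelli1 //; last 2 first.
- by apply: emeasurable_funM => //; apply/measurable_EFinP; exact: measurable_phi2.
- by move=> z; rewrite mule_ge0 // lee_fin mulr_ge0 ?phi_ge0.
rewrite /fubini_F /=.
transitivity (\int[N]_x \int[mu]_y (f (x, y) * (phi y)%:E)).
  by apply: eq_integral => x _; apply: ge0_integral_normal_prob => //; exact: measurable_fun_pair2.
rewrite ge0_integral_normal_prob //; first last.
- by move=> x; apply: integral_ge0 => y _; rewrite mule_ge0.
- exact: measurable_fun_fubini_tonelli_F mfphi (fun z => mule_ge0 (f0 z) (phiE_ge0 _)).
apply: eq_integral => x _; rewrite -ge0_integralZr //.
- by apply: eq_integral => y _; rewrite /phi2 /= -muleA -EFinM mulrC.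
- apply: emeasurable_funM; first exact: measurable_fun_pair2.
  by apply/measurable_EFinP; exact: measurable_phi.
- by move=> y _; rewrite mule_ge0.
- exact: phiE_ge0.
Qed.

Lemma ge0_integral_std_normal2_rotation_neq0 r c (f : RR -> \bar R) :
  (r ^+ 2 + c ^+ 2 = 1)%R -> (c != 0)%R ->
  measurable_fun [set: RR] f -> (forall z, 0 <= f z) ->
  \int[std_normal2]_z f (rotation r c z) = \int[std_normal2]_z f z.
Proof.
move=> rc c0 mf f0.
have phi2E_ge0 z : 0 <= (phi2 z)%:E by rewrite lee_fin mulr_ge0 ?phi_ge0.
have mfphi : measurable_fun [set: RR] (fun z => f z * (phi2 z)%:E).
  by apply: emeasurable_funM => //; apply/measurable_EFinP; exact: measurable_phi2.
rewrite !ge0_integral_std_normal2 //; last exact: measurableT_comp (measurable_rotation r c).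
rewrite -(ge0_integral_lebesgue2_rotation rc c0 mfphi) => [|z]; last exact: mule_ge0.
by apply: eq_integral => z _; rewrite phi2_rotation.
Qed.

Lemma rotation_1_0 : rotation (1 : R) 0 =1 id.
Proof. by case=> x y; rewrite /rotation /=; congr pair; ring. Qed.

Lemma rotation_N1_0 : rotation (-1 : R) 0 =1 rotation 0 1 \o rotation 0 1.
Proof. by case=> x y; rewrite /rotation /=; congr pair; ring. Qed.

Lemma ge0_integral_std_normal2_rotation r c (f : RR -> \bar R) :
  (r ^+ 2 + c ^+ 2 = 1)%R -> measurable_fun [set: RR] f -> (forall z, 0 <= f z) ->
  \int[std_normal2]_z f (rotation r c z) = \int[std_normal2]_z f z.
Proof.
move=> rc mf f0; have [c0|c0] := eqVneq c 0%R; last first.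
  exact: ge0_integral_std_normal2_rotation_neq0.
have rot01 : ((0 : R) ^+ 2 + 1 ^+ 2 = 1)%R by rewrite expr0n add0r expr1n.
move: rc; rewrite c0 expr0n addr0 => /eqP; rewrite sqrf_eq1 => /orP[]/eqP ->.
  by under eq_integral do rewrite rotation_1_0.
under eq_integral do rewrite rotation_N1_0.
rewrite (ge0_integral_std_normal2_rotation_neq0 (f := f \o rotation 0 1)) ?oner_neq0 //.
- exact: ge0_integral_std_normal2_rotation_neq0 rot01 (oner_neq0 _) mf f0.
- exact: measurableT_comp (measurable_rotation 0 1).
- by move=> z; exact: f0.
Qed.

Lemma integral_std_normal2_rotation r c (f : RR -> \bar R) :
  (r ^+ 2 + c ^+ 2 = 1)%R -> measurable_fun [set: RR] f ->
  \int[std_normal2]_z f (rotation r c z) = \int[std_normal2]_z f z.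
Proof.
move=> rc mf; rewrite integralE [RHS]integralE.
rewrite (funepos_comp f (rotation r c)) (funeneg_comp f (rotation r c)).
rewrite !ge0_integral_std_normal2_rotation //.
- exact: measurable_funeneg.
- exact: measurable_funepos.
Qed.

Definition halfplane (a : R) : set RR := [set z | (a < z.1)%R].

Lemma halfplaneE a : halfplane a = `]a, +oo[%classic `*` setT.
Proof. by apply/seteqP; split => -[x y]; rewrite /halfplane /= in_itv /= andbT => -[]. Qed.

Lemma measurable_halfplane a : measurable (halfplane a).
Proof. by rewrite halfplaneE; apply: measurableX. Qed.

Lemma std_normal2_halfplane a : std_normal2 (halfplane a) = (1 - Phi a)%:E.
Proof.
rewrite /std_normal2 halfplaneE product_measure1E //.
by change (N `]a, +oo[ * N setT = (1 - Phi a)%:E); rewrite probability_setT mule1 std_normal_itvoy.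
Qed.

Lemma integrable_std_normal2_fst : std_normal2.-integrable [set: RR] (fun z => (z.1)%:E).
Proof.
have mfst : measurable_fun [set: RR] (fun z : RR => (z.1)%:E).
  by apply/measurable_EFinP; exact: measurable_fst.
apply/integrableP; split => //.
rewrite fubini_tonelli1 //; last exact: measurableT_comp.
under eq_integral do rewrite /fubini_F /= integral_std_normal_cst.
by case/integrableP: (integrable_std_normal_id R).
Qed.

Lemma integrable_std_normal2_snd : std_normal2.-integrable [set: RR] (fun z => (z.2)%:E).
Proof.
have msnd : measurable_fun [set: RR] (fun z : RR => (z.2)%:E).
  by apply/measurable_EFinP; exact: measurable_snd.
apply/integrableP; split => //.
rewrite fubini_tonelli1 //; last exact: measurableT_comp.
rewrite /fubini_F /= integral_std_normal_cst.
by case/integrableP: (integrable_std_normal_id R).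
Qed.

Lemma integral_std_normal2_halfplane_fst a : (0 <= a)%R ->
  \int[std_normal2]_(z in halfplane a) (z.1)%:E = (phi a)%:E.
Proof.
move=> a0; have mH := measurable_halfplane a.
have mf : measurable_fun [set: RR] ((fun z : RR => (z.1)%:E) \_ (halfplane a)).
  apply/(measurable_restrictT _ mH)/measurable_funTS.
  by apply/measurable_EFinP; exact: measurable_fst.
rewrite integral_mkcond /std_normal2 fubini_tonelli1 //; last first.
  by case=> x y; rewrite patchE; case: ifPn => // /set_mem /= /ltW/(le_trans a0).
rewrite -integral_std_normal_itvoy_id // [RHS]integral_mkcond /fubini_F /=.
apply: eq_integral => x _; rewrite -[RHS]integral_std_normal_cst.
by apply: eq_integral => y _; rewrite !patchE !mem_setE /= in_itv /= andbT.
Qed.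

Lemma integral_std_normal2_halfplane_snd a :
  \int[std_normal2]_(z in halfplane a) (z.2)%:E = 0.
Proof.
have i2 : std_normal2.-integrable setT ((fun z : RR => (z.2)%:E) \_ (halfplane a)).
  apply/(integrable_mkcond _ (measurable_halfplane a)).
  exact: integrableS (measurable_halfplane a) (subsetT _) integrable_std_normal2_snd.
rewrite integral_mkcond -(integral12_prod_meas1 i2) /fubini_F /=.
rewrite -(integral0 N setT); apply: eq_integral => x _.
have [ax|xa] := ltP a x.
  under eq_integral => y _ do rewrite patchE (mem_set (ax : halfplane a (x, y))).
  exact: integral_std_normal_id.
have xNa y : ~ halfplane a (x, y) by rewrite /halfplane /= ltNge xa.
under eq_integral => y _ do rewrite patchE (memNset (xNa y)).
exact: integral0.
Qed.

Lemma integral_std_normal2_halfplane_affine a (al be ga : R) : (0 <= a)%R ->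
  \int[std_normal2]_(z in halfplane a) (al + be * z.1 + ga * z.2)%:E =
  (al * (1 - Phi a) + be * phi a)%:E.
Proof.
move=> a0; have mH := measurable_halfplane a.
have i1 : std_normal2.-integrable (halfplane a) (fun z => (z.1)%:E).
  exact: integrableS mH (subsetT _) integrable_std_normal2_fst.
have i2 : std_normal2.-integrable (halfplane a) (fun z => (z.2)%:E).
  exact: integrableS mH (subsetT _) integrable_std_normal2_snd.
have ic : std_normal2.-integrable (halfplane a) (fun _ => al%:E).
  apply/integrableP; split => //.
  rewrite -[fun _ => _]/(cst `|al%:E|) integral_cst //.
  change (`|al%:E| * std_normal2 (halfplane a) < +oo).
  by rewrite std_normal2_halfplane -EFinM ltry.
rewrite (eq_integral (fun z : RR => (al%:E + be%:E * (z.1)%:E) + ga%:E * (z.2)%:E)); last first.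
  by move=> z _; rewrite -!EFinM -!EFinD.
have i1' := integrableZl mH be i1; have i2' := integrableZl mH ga i2.
rewrite integralD //; last exact: (integrableD mH ic i1').
rewrite integralD // !integralZl //.
rewrite integral_std_normal2_halfplane_fst // integral_std_normal2_halfplane_snd mule0 adde0.
rewrite -[fun _ => _]/(cst al%:E) integral_cst //.
change (al%:E * std_normal2 (halfplane a) + (be * phi a)%:E =
  (al * (1 - Phi a) + be * phi a)%:E).
by rewrite std_normal2_halfplane -EFinM -EFinD.
Qed.

End std_normal2.

Section performance.
Variable R : realType.
Local Notation RR := (measurableTypeR R * measurableTypeR R)%type.
Implicit Types (p_u p_v mu_u mu_v s_u s_v rho t X Y m b c a : R).

Lemma convex_combination_lt0 p_u p_v X Y : 0 <= p_u -> 0 <= p_v -> p_u + p_v = 1 ->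
  X < 0 -> Y < 0 -> p_u * X + p_v * Y < 0.
Proof.
move=> pu pv puv X0 Y0; have [pu_gt0|pu_le0] := ltP 0 p_u; first nra.
have pu0 : p_u = 0 by lra.
nra.
Qed.

Lemma integral_sum_on_bnU_gt mu_u mu_v s_u s_v rho t : mu_u <= t -> 0 < s_u ->
  (\int[std_normal2]_(z in [set z | (t < bnU mu_u s_u z)%R])
     (bnU mu_u s_u z + bnV mu_v s_v rho z)%:E =
   ((mu_u + mu_v) * (1 - Phi ((t - mu_u) / s_u)) +
    (s_u + s_v * rho) * phi ((t - mu_u) / s_u))%:E)%E.
Proof.
move=> mut su0; set a := (t - mu_u) / s_u.
have a0 : 0 <= a by rewrite divr_ge0 ?subr_ge0 // ltW.
have -> : [set z | (t < bnU mu_u s_u z)%R] = halfplane a.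
  by apply/seteqP; split => z; rewrite /= /halfplane /bnU /= /a ltr_pdivrMr // => ?; lra.
rewrite -(integral_std_normal2_halfplane_affine _ _ (s_v * Num.sqrt (1 - rho ^+ 2))) //.
apply: eq_integral => z _.
by rewrite /bnU /bnV; congr (_%:E); ring.
Qed.

Lemma integral_sum_on_bnV_gt mu_u mu_v s_u s_v rho t : mu_v <= t -> 0 < s_v ->
  -1 <= rho <= 1 ->
  (\int[std_normal2]_(z in [set z | (t < bnV mu_v s_v rho z)%R])
     (bnU mu_u s_u z + bnV mu_v s_v rho z)%:E =
   ((mu_u + mu_v) * (1 - Phi ((t - mu_v) / s_v)) +
    (s_u * rho + s_v) * phi ((t - mu_v) / s_v))%:E)%E.
Proof.
move=> mvt sv0 /andP[rho_ge rho_le]; set b := (t - mu_v) / s_v.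
have b0 : 0 <= b by rewrite divr_ge0 ?subr_ge0 // ltW.
set c := Num.sqrt (1 - rho ^+ 2).
have rc : rho ^+ 2 + c ^+ 2 = 1 by rewrite sqr_sqrtr ?subr_ge0; [ring | nra].
pose h (w : RR) := (mu_u + mu_v + (s_u * rho + s_v) * w.1 + - (s_u * c) * w.2)%:E.
have mh : measurable_fun [set: RR] (h \_ (halfplane b)).
  apply/(measurable_restrictT _ (measurable_halfplane b))/measurable_funTS.
  apply/measurable_EFinP; apply: measurable_funD; [apply: measurable_funD|].
  - exact: measurable_cst.
  - by apply: measurable_funM => //; exact: measurable_fst.
  - by apply: measurable_funM => //; exact: measurable_snd.
rewrite -(integral_std_normal2_halfplane_affine _ _ (- (s_u * c))) //.
rewrite integral_mkcond [RHS]integral_mkcond.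
rewrite -(integral_std_normal2_rotation rc mh); apply: eq_integral => z _; rewrite !patchE.
have bE x : (b < x) = (t < mu_v + s_v * x).
  by rewrite /b ltr_pdivrMr //; apply/idP/idP => ?; lra.
have -> : (z \in [set z | (t < bnV mu_v s_v rho z)%R]) = (rotation rho c z \in halfplane b).
  by apply/idP/idP => /set_mem zH; apply/mem_set; move: zH; rewrite /halfplane /bnV /= bE.
case: ifPn => // _; rewrite /h /bnU /bnV -/c /=; congr (_%:E).
by rewrite -[s_u * z.1]mulr1 -rc; ring.
Qed.

Lemma perf_gE p_u p_v mu_u mu_v s_u s_v rho z_u z_v :
  mu_u <= z_u -> mu_v <= z_v -> 0 < s_u -> 0 < s_v -> -1 <= rho <= 1 ->
  perf_g p_u p_v mu_u mu_v s_u s_v rho z_u z_v =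
  (p_u * ((mu_u + mu_v) * (1 - Phi ((z_u - mu_u) / s_u)) +
          (s_u + s_v * rho) * phi ((z_u - mu_u) / s_u)) +
   p_v * ((mu_u + mu_v) * (1 - Phi ((z_v - mu_v) / s_v)) +
          (s_u * rho + s_v) * phi ((z_v - mu_v) / s_v)))%:E.
Proof.
by move=> *; rewrite /perf_g integral_sum_on_bnU_gt // integral_sum_on_bnV_gt // -!EFinM -EFinD.
Qed.

Lemma tail_term_lt0 m b c rho a : 0 < c -> rho < (- m * Mills a - b) / c ->
  m * (1 - Phi a) + (b + c * rho) * phi a < 0.
Proof.
move=> c0; rewrite ltr_pdivlMr // => rho_lt.
have -> : 1 - Phi a = Mills a * phi a by rewrite /Mills divfK // gt_eqF ?phi_gt0.
by rewrite mulrA -mulrDl pmulr_llt0 ?phi_gt0 //; nra.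
Qed.

Lemma rho1E mu_u mu_v s_u s_v : mu_u != 0 -> 0 < s_u -> 0 < s_v ->
  rho1 mu_u mu_v s_u s_v = (- (mu_u + mu_v) * Mills (- mu_u / s_u) - s_u) / s_v.
Proof. by move=> mu0 /gt_eqF su0 /gt_eqF sv0; rewrite /rho1; field; rewrite mu0 su0 sv0. Qed.

Lemma rho2E mu_u mu_v s_u s_v : mu_v != 0 -> 0 < s_u -> 0 < s_v ->
  rho2 mu_u mu_v s_u s_v = (- (mu_u + mu_v) * Mills (- mu_v / s_v) - s_v) / s_u.
Proof. by move=> mv0 /gt_eqF su0 /gt_eqF sv0; rewrite /rho2; field; rewrite mv0 su0 sv0. Qed.

End performance.

Unset Implicit Arguments.

Theorem proposition3 (R : realType) (p_u p_v mu_u mu_v s_u s_v rho : R) :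
  0 <= p_u -> 0 <= p_v -> p_u + p_v = 1 ->
  mu_u < 0 -> mu_v < 0 -> 0 < s_u -> 0 < s_v ->
  rho <= 1 -> -1 <= rho -> rho < Num.min (rho1 mu_u mu_v s_u s_v) (rho2 mu_u mu_v s_u s_v) ->
  (perf_g p_u p_v mu_u mu_v s_u s_v rho 0 0 < 0)%E.
Proof.
move=> pu0 pv0 puv mu0 mv0 su0 sv0 rho_le rho_ge; rewrite lt_min => /andP[lt1 lt2].
rewrite perf_gE ?rho_ge ?rho_le ?(ltW mu0) ?(ltW mv0) // lte_fin !sub0r.
apply: convex_combination_lt0 => //.
  by apply: tail_term_lt0; rewrite // -rho1E ?lt_eqF.
by rewrite (addrC (s_u * rho)); apply: tail_term_lt0; rewrite // -rho2E ?lt_eqF.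
Qed.
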